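(* A sequent $\Gamma\Rightarrow\Delta$ (of formulas of $\mathcal{L}^\Box$) is derivable in $\mathsf{S.ConstCK}^\Box$ if and only if $\iota(\Gamma\Rightarrow\Delta)$ is derivable in $\mathsf{ConstCK}^\Box$.
   Context: Language $\mathcal{L}^\Box$: formulas $\varphi ::= p \mid \bot \mid \varphi\wedge\varphi \mid \varphi\vee\varphi \mid \varphi\to\varphi \mid \varphi \mathrel{\Box\!\!\to} \varphi$; $\neg\varphi:=\varphi\to\bot$, $\top:=\neg\bot$, $\varphi\leftrightarrow\psi:=(\varphi\to\psi)\wedge(\psi\to\varphi)$. $\mathsf{ConstCK}^\Box$: any axiomatisation of intuitionistic propositional logic in $\mathcal{L}^\Box$ with modus ponens, plus RA$_\Box$: from $\varphi\leftrightarrow\rho$ infer $(\varphi\mathrel{\Box\!\!\to}\psi)\leftrightarrow(\rho\mathrel{\Box\!\!\to}\psi)$; RC$_\Box$: from $\psi\leftrightarrow\chi$ infer $(\varphi\mathrel{\Box\!\!\to}\psi)\leftrightarrow(\varphi\mathrel{\Box\!\!\to}\chi)$; CM$_\Box$: $(\varphi\mathrel{\Box\!\!\to}\psi\wedge\chi)\to(\varphi\mathrel{\Box\!\!\to}\psi)\wedge(\varphi\mathrel{\Box\!\!\to}\chi)$; CC$_\Box$: $(\varphi\mathrel{\Box\!\!\to}\psi)\wedge(\varphi\mathrel{\Box\!\!\to}\chi)\to(\varphi\mathrel{\Box\!\!\to}\psi\wedge\chi)$; CN$_\Box$: $\varphi\mathrel{\Box\!\!\to}\top$. A sequent $\Gamma\Rightarrow\Delta$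 is a pair of finite multisets of formulas with $|\Delta|\le1$; $\varphi\Leftrightarrow\rho$ abbreviates $\varphi\Rightarrow\rho$ and $\rho\Rightarrow\varphi$. $\iota(\Gamma\Rightarrow\Delta)=\bigwedge\Gamma\to\bigvee\Delta$ if $\Gamma\ne\emptyset$, $\bigvee\Delta$ otherwise, with $\bigvee\emptyset=\bot$. Rules of $\mathsf{S.ConstCK}^\Box$ (premisses / conclusion, $0\le|\Delta|\le1$, $n\ge0$): init: $\Gamma,p\Rightarrow p$; $\bot_L$: $\Gamma,\bot\Rightarrow\Delta$; $\wedge_L$: $\Gamma,\varphi,\psi\Rightarrow\Delta$ / $\Gamma,\varphi\wedge\psi\Rightarrow\Delta$; $\wedge_R$: $\Gamma\Rightarrow\varphi$, $\Gamma\Rightarrow\psi$ / $\Gamma\Rightarrow\varphi\wedge\psi$; $\vee_L$: $\Gamma,\varphi\Rightarrow\Delta$, $\Gamma,\psi\Rightarrow\Delta$ / $\Gamma,\varphi\vee\psi\Rightarrow\Delta$; $\vee_R^1$: $\Gamma\Rightarrow\varphi$ / $\Gamma\Rightarrow\varphi\vee\psi$; $\vee_R^2$: $\Gamma\Rightarrow\psi$ / $\Gamma\Rightarrow\varphi\vee\psi$; $\to_R$: $\Gamma,\varphi\Rightarrow\psi$ / $\Gamma\Rightarrow\varphi\to\psi$; $\to_L$: $\Gamma,\varphi\to\psi\Rightarrow\varphi$, $\Gamma,\psi\Rightarrow\Delta$ / $\Gamma,\varphi\to\psi\Rightarrow\Delta$; $\Box$: $\{\varphi\Leftrightarrow\rho_i\}_{i\le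 n}$, $\sigma_1,\dots,\sigma_n\Rightarrow\psi$ / $\Gamma,\rho_1\mathrel{\Box\!\!\to}\sigma_1,\dots,\rho_n\mathrel{\Box\!\!\to}\sigma_n\Rightarrow\varphi\mathrel{\Box\!\!\to}\psi$. *)

From Stdlib Require Import List Permutation.
Import ListNotations.

Inductive formula : Type :=
| Var : nat -> formula
| Bot : formula
| And : formula -> formula -> formula
| Or  : formula -> formula -> formula
| Imp : formula -> formula -> formula
| SImp : formula -> formula -> formula.

Definition Neg (a : formula) : formula := Imp a Bot.
Definition Top : formula := Neg Bot.
Definition Iff (a b : formula) : formula := And (Imp a b) (Imp b a).

Inductive HDer : formula -> Prop :=
| A1 a b : HDer (Imp a (Imp b a))
| A2 a b c : HDer (Imp (Imp a (Imp b c)) (Imp (Imp a b) (Imp a c)))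
| A3 a b : HDer (Imp (And a b) a)
| A4 a b : HDer (Imp (And a b) b)
| A5 a b : HDer (Imp a (Imp b (And a b)))
| A6 a b : HDer (Imp a (Or a b))
| A7 a b : HDer (Imp b (Or a b))
| A8 a b c : HDer (Imp (Imp a c) (Imp (Imp b c) (Imp (Or a b) c)))
| A9 a : HDer (Imp Bot a)
| MP a b : HDer (Imp a b) -> HDer a -> HDer b
| RA a r b : HDer (Iff a r) -> HDer (Iff (SImp a b) (SImp r b))
| RC a b c : HDer (Iff b c) -> HDer (Iff (SImp a b) (SImp a c))
| CM a b c : HDer (Imp (SImp a (And b c)) (And (SImp a b) (SImp a c)))
| CC a b c : HDer (Imp (And (SImp a b) (SImp a c)) (SImp a (And b c)))
| CN a : HDer (SImp a Top).

(* Sequents: finite multisets are represented by lists taken up to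
   permutation (every rule conclusion is stated modulo Permutation);
   the succedent (|Delta| <= 1) is an option formula. *)
Inductive SDer : list formula -> option formula -> Prop :=
| S_init G G' p :
    Permutation G' (Var p :: G) -> SDer G' (Some (Var p))
| S_botL G G' D :
    Permutation G' (Bot :: G) -> SDer G' D
| S_andL G G' a b D :
    Permutation G' (And a b :: G) -> SDer (a :: b :: G) D -> SDer G' D
| S_andR G a b :
    SDer G (Some a) -> SDer G (Some b) -> SDer G (Some (And a b))
| S_orL G G' a b D :
    Permutation G' (Or a b :: G) ->
    SDer (a :: G) D -> SDer (b :: G) D -> SDer G' D
| S_orR1 G a b : SDer G (Some a) -> SDer G (Some (Or a b))
| S_orR2 G a b : SDer G (Some b) -> SDer G (Some (Or a b))
| S_impR G a b : SDer (a :: G) (Some b) -> SDer G (Some (Imp a b))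
| S_impL G G' a b D :
    Permutation G' (Imp a b :: G) ->
    SDer (Imp a b :: G) (Some a) -> SDer (b :: G) D -> SDer G' D
| S_box G G' (l : list (formula * formula)) a b :
    Permutation G' (map (fun rs => SImp (fst rs) (snd rs)) l ++ G) ->
    (forall rs, In rs l -> SDer [a] (Some (fst rs)) /\ SDer [fst rs] (Some a)) ->
    SDer (map snd l) (Some b) ->
    SDer G' (Some (SImp a b)).

Fixpoint big_and (G : list formula) : formula :=
  match G with
  | [] => Top
  | [x] => x
  | x :: xs => And x (big_and xs)
  end.

Definition big_or (D : option formula) : formula :=
  match D with None => Bot | Some a => a end.

Definition iota (G : list formula) (D : option formula) : formula :=
  match G with
  | [] => big_or D
  | _ => Imp (big_and G) (big_or D)
  end.

(* Soundness: reading [G => D] as "D follows from the hypotheses G", every sequent rule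
   is admissible in ConstCK^Box by the deduction theorem.  For the box rule, RA moves every
   antecedent to [a], CC collects the consequents, and [a []-> _] is monotone by RC and CM
   (CN covers the empty case).
   Completeness: every axiom and rule of ConstCK^Box is derivable in the sequent calculus,
   modus ponens through cut.  Cut is admissible by induction on the cut formula and then on
   the sum of the derivation heights, using height-preserving weakening, inversion of the
   left rules and contraction; a cut on a strict conditional principal on both sides
   becomes cuts on its antecedent and consequent. *)

From Stdlib Require Import List Permutation Lia Arith.
Import ListNotations.

Definition formula_eq_dec (x y : formula) : {x = y} + {x <> y}.
Proof. decide equality; apply Nat.eq_dec. Qed.

(* Decides multiset equalities by comparing the number of occurrences of every formula. *)
Ltac perm_solve :=
  let z := fresh "z" in
  apply (proj2 (Permutation_count_occ formula_eq_dec _ _)); intro z;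
  repeat match goal with
  | H : Permutation _ _ |- _ =>
      let H' := fresh in
      pose proof (proj1 (Permutation_count_occ formula_eq_dec _ _) H z) as H';
      clear H; revert H'
  end;
  simpl; rewrite ?map_app, ?count_occ_app; simpl; rewrite ?count_occ_app;
  repeat destruct (formula_eq_dec _ _); intros; lia.

Definition simp_pair (rs : formula * formula) : formula := SImp (fst rs) (snd rs).

Lemma in_perm_split {T : Type} (A : T) G : In A G -> exists G0, Permutation G (A :: G0).
Proof.
  intros HA; apply in_split in HA as [L1 [L2 ->]].
  exists (L1 ++ L2); symmetry; apply Permutation_middle.
Qed.

Lemma perm_two_cons (G' G G0 : list formula) X Y :
  Permutation G' (X :: G) -> Permutation G' (Y :: G0) ->
  (X = Y /\ Permutation G G0) \/
  (exists G1, Permutation G0 (X :: G1) /\ Permutation G (Y :: G1)).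
Proof.
  intros HX HY; destruct (formula_eq_dec X Y) as [<-|Hne].
  - left; split; [reflexivity|].
    apply (Permutation_cons_inv (a := X)); now rewrite <- HX.
  - right. assert (Hin : In X G0).
    { assert (HX0 : In X (Y :: G0)) by (rewrite <- HY, HX; left; auto).
      destruct HX0; [congruence | auto]. }
    destruct (in_perm_split _ _ Hin) as [G1 HG1].
    exists G1; split; [auto|].
    apply (Permutation_cons_inv (a := X)); rewrite <- HX, HY, HG1; perm_solve.
Qed.

Lemma perm_cons_box (G' G G0 : list formula) X l :
  Permutation G' (X :: G) -> Permutation G' (map simp_pair l ++ G0) ->
  (exists G1, Permutation G0 (X :: G1) /\ Permutation G (map simp_pair l ++ G1)) \/
  (exists rs l0, X = simp_pair rs /\ Permutation l (rs :: l0) /\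
                 Permutation G (map simp_pair l0 ++ G0)).
Proof.
  intros HX HY.
  assert (Hin : In X (map simp_pair l ++ G0)) by (rewrite <- HY, HX; left; auto).
  apply in_app_or in Hin as [Hin|Hin].
  - right. apply in_map_iff in Hin as [rs [<- Hin]].
    destruct (in_perm_split _ _ Hin) as [l0 Hl0].
    exists rs, l0; repeat split; [auto|].
    apply (Permutation_cons_inv (a := simp_pair rs)).
    rewrite <- HX, HY, Hl0; perm_solve.
  - left. destruct (in_perm_split _ _ Hin) as [G1 HG1].
    exists G1; split; [auto|].
    apply (Permutation_cons_inv (a := X)); rewrite <- HX, HY, HG1; perm_solve.
Qed.

Lemma perm_double_cons (G' G G0 : list formula) X Y :
  Permutation G' (X :: X :: G) -> Permutation G' (Y :: G0) ->
  (X = Y /\ Permutation G0 (X :: G)) \/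
  (exists G1, Permutation G0 (X :: X :: G1) /\ Permutation G (Y :: G1)).
Proof.
  intros HX HY.
  destruct (perm_two_cons _ _ _ _ _ HX HY) as [[-> HP]|[G1 [H1 H2]]].
  - left; split; auto; symmetry; auto.
  - destruct (perm_two_cons _ _ _ _ _ (Permutation_refl _) H2) as [[-> HP]|[G2 [H3 H4]]].
    + left; split; auto; rewrite H1, HP; auto.
    + right; exists G2; split; [rewrite H1, H3 |]; auto.
Qed.

Lemma perm_double_box (G' G G0 : list formula) X l :
  Permutation G' (X :: X :: G) -> Permutation G' (map simp_pair l ++ G0) ->
  (exists G1, Permutation G0 (X :: G1) /\ Permutation (X :: G) (map simp_pair l ++ G1)) \/
  (exists rs l0, X = simp_pair rs /\ Permutation l (rs :: rs :: l0) /\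
                 Permutation G (map simp_pair l0 ++ G0)).
Proof.
  intros HX HY.
  destruct (perm_cons_box _ _ _ _ _ HX HY) as [[G1 [H1 H2]]|[rs [l0 [-> [H1 H2]]]]].
  - left; exists G1; auto.
  - destruct (perm_cons_box _ _ _ _ _ (Permutation_refl _) H2)
      as [[G2 [H3 H4]]|[rs' [l1 [E [H3 H4]]]]].
    + left; exists G2; split; auto; rewrite H1, H4; simpl; perm_solve.
    + right; destruct rs as [r s], rs' as [r' s']; injection E as <- <-.
      exists (r, s), l1; repeat split; [rewrite H1, H3 | ]; auto.
Qed.

(* Height-bounded derivations.  The side premises of the box rule stay unbounded: cut
   elimination only ever cuts them on strictly smaller formulas. *)
Inductive SDerh : nat -> list formula -> option formula -> Prop :=
| Sh_init n G G' p : Permutation G' (Var p :: G) -> SDerh n G' (Some (Var p))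
| Sh_botL n G G' D : Permutation G' (Bot :: G) -> SDerh n G' D
| Sh_andL n G G' a b D : Permutation G' (And a b :: G) ->
    SDerh n (a :: b :: G) D -> SDerh (S n) G' D
| Sh_andR n G a b : SDerh n G (Some a) -> SDerh n G (Some b) -> SDerh (S n) G (Some (And a b))
| Sh_orL n G G' a b D : Permutation G' (Or a b :: G) ->
    SDerh n (a :: G) D -> SDerh n (b :: G) D -> SDerh (S n) G' D
| Sh_orR1 n G a b : SDerh n G (Some a) -> SDerh (S n) G (Some (Or a b))
| Sh_orR2 n G a b : SDerh n G (Some b) -> SDerh (S n) G (Some (Or a b))
| Sh_impR n G a b : SDerh n (a :: G) (Some b) -> SDerh (S n) G (Some (Imp a b))
| Sh_impL n G G' a b D : Permutation G' (Imp a b :: G) ->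
    SDerh n (Imp a b :: G) (Some a) -> SDerh n (b :: G) D -> SDerh (S n) G' D
| Sh_box n G G' l a b : Permutation G' (map simp_pair l ++ G) ->
    (forall rs, In rs l -> SDer [a] (Some (fst rs)) /\ SDer [fst rs] (Some a)) ->
    SDerh n (map snd l) (Some b) -> SDerh (S n) G' (Some (SImp a b)).

Lemma SDerh_perm n G G' D : SDerh n G D -> Permutation G G' -> SDerh n G' D.
Proof.
  intros H; revert G'; induction H; intros G2 HP.
  - eapply Sh_init; rewrite <- HP; eauto.
  - eapply Sh_botL; rewrite <- HP; eauto.
  - eapply Sh_andL; [rewrite <- HP|]; eauto.
  - apply Sh_andR; auto.
  - eapply Sh_orL; [rewrite <- HP| |]; eauto.
  - apply Sh_orR1; auto.
  - apply Sh_orR2; auto.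
  - apply Sh_impR; auto.
  - eapply Sh_impL; [rewrite <- HP| |]; eauto.
  - eapply Sh_box; [rewrite <- HP| |]; eauto.
Qed.

Lemma SDerh_S n G D : SDerh n G D -> SDerh (S n) G D.
Proof.
  induction 1.
  - eapply Sh_init; eauto.
  - eapply Sh_botL; eauto.
  - eapply Sh_andL; eauto.
  - apply Sh_andR; auto.
  - eapply Sh_orL; eauto.
  - apply Sh_orR1; auto.
  - apply Sh_orR2; auto.
  - apply Sh_impR; auto.
  - eapply Sh_impL; eauto.
  - eapply Sh_box; eauto.
Qed.

Lemma SDerh_mono n m G D : n <= m -> SDerh n G D -> SDerh m G D.
Proof. induction 1; auto using SDerh_S. Qed.

Lemma SDerh_SDer n G D : SDerh n G D -> SDer G D.
Proof.
  induction 1.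
  - eapply S_init; eauto.
  - eapply S_botL; eauto.
  - eapply S_andL; eauto.
  - apply S_andR; auto.
  - eapply S_orL; eauto.
  - apply S_orR1; auto.
  - apply S_orR2; auto.
  - apply S_impR; auto.
  - eapply S_impL; eauto.
  - eapply S_box; eauto.
Qed.

Lemma SDer_SDerh G D : SDer G D -> exists n, SDerh n G D.
Proof.
  induction 1;
    repeat match goal with H : exists n, _ |- _ => destruct H as [?n ?] end.
  - exists 0; eapply Sh_init; eauto.
  - exists 0; eapply Sh_botL; eauto.
  - eexists; eapply Sh_andL; eauto.
  - exists (S (max n n0)); apply Sh_andR;
      eapply SDerh_mono; try eassumption; lia.
  - exists (S (max n n0)); eapply Sh_orL; eauto;
      eapply SDerh_mono; try eassumption; lia.
  - eexists; apply Sh_orR1; eauto.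
  - eexists; apply Sh_orR2; eauto.
  - eexists; apply Sh_impR; eauto.
  - exists (S (max n n0)); eapply Sh_impL; eauto;
      eapply SDerh_mono; try eassumption; lia.
  - eexists; eapply Sh_box; eauto.
Qed.

Lemma SDerh_init_in n G p : In (Var p) G -> SDerh n G (Some (Var p)).
Proof. intros Hp; destruct (in_perm_split _ _ Hp); eapply Sh_init; eauto. Qed.

Lemma SDerh_bot_in n G D : In Bot G -> SDerh n G D.
Proof. intros Hb; destruct (in_perm_split _ _ Hb); eapply Sh_botL; eauto. Qed.

Lemma SDerh_weaken n G D X : SDerh n G D -> SDerh n (X :: G) D.
Proof.
  intros H; revert X.
  induction H as [n G G' p HP | n G G' D HP | n G G' a b D HP _ IH | n G a b _ IHa _ IHb
    | n G G' a b D HP _ IHa _ IHb | n G a b _ IH | n G a b _ IH | n G a b _ IH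
    | n G G' a b D HP _ IHa _ IHb | n G G' l a b HP Hside Hb _]; intros X.
  - apply SDerh_init_in; right; rewrite HP; left; auto.
  - apply SDerh_bot_in; right; rewrite HP; left; auto.
  - eapply Sh_andL with (G := X :: G) (a := a) (b := b); [perm_solve|].
    eapply SDerh_perm; [apply (IH X) | perm_solve].
  - apply Sh_andR; auto.
  - eapply Sh_orL with (G := X :: G) (a := a) (b := b); [perm_solve| |].
    + eapply SDerh_perm; [apply (IHa X) | perm_solve].
    + eapply SDerh_perm; [apply (IHb X) | perm_solve].
  - apply Sh_orR1; auto.
  - apply Sh_orR2; auto.
  - apply Sh_impR; eapply SDerh_perm; [apply (IH X) | perm_solve].
  - eapply Sh_impL with (G := X :: G) (a := a) (b := b); [perm_solve| |].
    + eapply SDerh_perm; [apply (IHa X) | perm_solve].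
    + eapply SDerh_perm; [apply (IHb X) | perm_solve].
  - eapply Sh_box with (G := X :: G) (l := l); eauto; perm_solve.
Qed.

Inductive left_premise : formula -> list formula -> Prop :=
| lp_and a b : left_premise (And a b) [a; b]
| lp_or1 a b : left_premise (Or a b) [a]
| lp_or2 a b : left_premise (Or a b) [b]
| lp_imp a b : left_premise (Imp a b) [b].

Lemma SDerh_invert n G' D X Ys G : SDerh n G' D -> left_premise X Ys ->
  Permutation G' (X :: G) -> SDerh n (Ys ++ G) D.
Proof.
  intros H HXY; revert G.
  induction H as [n G G' p HP | n G G' D HP | n G G' a b D HP Hab IH | n G a b _ IHa _ IHb
    | n G G' a b D HP Ha IHa Hb IHb | n G a b _ IH | n G a b _ IH | n G a b _ IH
    | n G G' a b D HP Ha IHa Hb IHb | n G G' l a b HP Hside Hb _]; intros GG HG.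
  - assert (Hin : In (Var p) (X :: GG)) by (rewrite <- HG, HP; left; auto).
    destruct Hin as [->|Hin]; [inversion HXY|].
    apply SDerh_init_in, in_or_app; auto.
  - assert (Hin : In Bot (X :: GG)) by (rewrite <- HG, HP; left; auto).
    destruct Hin as [->|Hin]; [inversion HXY|].
    apply SDerh_bot_in, in_or_app; auto.
  - destruct (perm_two_cons _ _ _ _ _ HG HP) as [[-> HP']|[G1 [HG1 HGG]]].
    + inversion HXY; subst; apply SDerh_S; eapply SDerh_perm; [exact Hab | perm_solve].
    + eapply Sh_andL with (G := Ys ++ G1) (a := a) (b := b); [perm_solve|].
      eapply SDerh_perm; [apply (IH (a :: b :: G1)) | ]; perm_solve.
  - apply Sh_andR; auto.
  - destruct (perm_two_cons _ _ _ _ _ HG HP) as [[-> HP']|[G1 [HG1 HGG]]].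
    + inversion HXY; subst; apply SDerh_S;
        [eapply SDerh_perm; [exact Ha|] | eapply SDerh_perm; [exact Hb|]]; perm_solve.
    + eapply Sh_orL with (G := Ys ++ G1) (a := a) (b := b); [perm_solve| |].
      * eapply SDerh_perm; [apply (IHa (a :: G1)) | ]; perm_solve.
      * eapply SDerh_perm; [apply (IHb (b :: G1)) | ]; perm_solve.
  - apply Sh_orR1; auto.
  - apply Sh_orR2; auto.
  - apply Sh_impR; eapply SDerh_perm; [apply (IH (a :: GG)) | ]; perm_solve.
  - destruct (perm_two_cons _ _ _ _ _ HG HP) as [[-> HP']|[G1 [HG1 HGG]]].
    + inversion HXY; subst; apply SDerh_S; eapply SDerh_perm; [exact Hb | perm_solve].
    + eapply Sh_impL with (G := Ys ++ G1) (a := a) (b := b); [perm_solve| |].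
      * eapply SDerh_perm; [apply (IHa (Imp a b :: G1)) | ]; perm_solve.
      * eapply SDerh_perm; [apply (IHb (b :: G1)) | ]; perm_solve.
  - destruct (perm_cons_box _ _ _ _ _ HG HP) as [[G1 [HG1 HGG]]|[rs [l0 [-> _]]]];
      [|inversion HXY].
    eapply Sh_box with (G := Ys ++ G1) (l := l); eauto; perm_solve.
Qed.

Definition contraction_at (n : nat) : Prop := forall G' X G D,
  SDerh n G' D -> Permutation G' (X :: X :: G) -> SDerh n (X :: G) D.

Lemma SDerh_contract_app m L G D : contraction_at m ->
  SDerh m (L ++ L ++ G) D -> SDerh m (L ++ G) D.
Proof.
  intros Hm; revert G; induction L as [|x L IHL]; intros G H; [exact H|].
  apply (Hm (L ++ x :: x :: G)); [|perm_solve].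
  apply IHL; eapply SDerh_perm; [exact H | perm_solve].
Qed.

Lemma SDerh_contract_premise m X Ys G GG D : contraction_at m -> left_premise X Ys ->
  SDerh m (Ys ++ G) D -> Permutation G (X :: GG) -> SDerh m (Ys ++ GG) D.
Proof.
  intros Hm HXY H HG; apply SDerh_contract_app; [exact Hm|].
  eapply SDerh_invert; [exact H | exact HXY | rewrite HG; perm_solve].
Qed.

Lemma contraction_at_box n G' X G G0 l a b : contraction_at n ->
  Permutation G' (X :: X :: G) -> Permutation G' (map simp_pair l ++ G0) ->
  (forall rs, In rs l -> SDer [a] (Some (fst rs)) /\ SDer [fst rs] (Some a)) ->
  SDerh n (map snd l) (Some b) -> SDerh (S n) (X :: G) (Some (SImp a b)).
Proof.
  intros Hn HG HG' Hside Hb.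
  destruct (perm_double_box _ _ _ _ _ HG HG') as [[G1 [HP1 HP2]]|[rs [l0 [-> [HP1 HP2]]]]].
  - eapply Sh_box; eauto.
  - eapply Sh_box with (l := rs :: l0).
    + rewrite HP2; simpl; auto.
    + intros rs' Hin; apply Hside; rewrite HP1; destruct Hin; [left | right; right]; auto.
    + exact (Hn _ _ _ _ Hb (Permutation_map snd HP1)).
Qed.

Lemma contraction_at_step n : (forall m, m < n -> contraction_at m) -> contraction_at n.
Proof.
  intros contract_below G' X G D H HG.
  inversion H as [? ? ? p HP | ? ? ? ? HP | n0 ? ? a b ? HP Hab | n0 ? a b Ha Hb
    | n0 ? ? a b ? HP Ha Hb | n0 ? a b Ha | n0 ? a b Hb | n0 ? a b Hab
    | n0 ? ? a b ? HP Ha Hb | n0 ? ? l a b HP Hside Hb]; subst.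
  - assert (Hin : In (Var p) (X :: X :: G)) by (rewrite <- HG, HP; left; auto).
    apply SDerh_init_in; destruct Hin as [<-|Hin]; [left|]; auto.
  - assert (Hin : In Bot (X :: X :: G)) by (rewrite <- HG, HP; left; auto).
    apply SDerh_bot_in; destruct Hin as [<-|Hin]; [left|]; auto.
  - destruct (perm_double_cons _ _ _ _ _ HG HP) as [[-> HP']|[G1 [HP1 HP2]]].
    + eapply Sh_andL; [eauto|].
      apply (SDerh_contract_premise n0 (And a b) [a; b] G0); auto using lp_and.
    + eapply Sh_andL with (G := X :: G1) (a := a) (b := b); [perm_solve|].
      eapply SDerh_perm; [apply (contract_below n0 ltac:(lia) _ X (a :: b :: G1) _ Hab) | ];
        perm_solve.
  - apply Sh_andR; eapply contract_below; eauto.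
  - destruct (perm_double_cons _ _ _ _ _ HG HP) as [[-> HP']|[G1 [HP1 HP2]]].
    + eapply Sh_orL; [eauto| |].
      * apply (SDerh_contract_premise n0 (Or a b) [a] G0); auto using lp_or1.
      * apply (SDerh_contract_premise n0 (Or a b) [b] G0); auto using lp_or2.
    + eapply Sh_orL with (G := X :: G1) (a := a) (b := b); [perm_solve| |].
      * eapply SDerh_perm; [apply (contract_below n0 ltac:(lia) _ X (a :: G1) _ Ha) | ];
          perm_solve.
      * eapply SDerh_perm; [apply (contract_below n0 ltac:(lia) _ X (b :: G1) _ Hb) | ];
          perm_solve.
  - apply Sh_orR1; eapply contract_below; eauto.
  - apply Sh_orR2; eapply contract_below; eauto.
  - apply Sh_impR; eapply SDerh_perm;
      [apply (contract_below n0 ltac:(lia) _ X (a :: G) _ Hab) | ]; perm_solve.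
  - destruct (perm_double_cons _ _ _ _ _ HG HP) as [[-> HP']|[G1 [HP1 HP2]]].
    + eapply Sh_impL; [eauto| |].
      * apply (contract_below n0 ltac:(lia) _ _ _ _ Ha); rewrite HP'; auto.
      * apply (SDerh_contract_premise n0 (Imp a b) [b] G0); auto using lp_imp.
    + eapply Sh_impL with (G := X :: G1) (a := a) (b := b); [perm_solve| |].
      * eapply SDerh_perm;
          [apply (contract_below n0 ltac:(lia) _ X (Imp a b :: G1) _ Ha) | ]; perm_solve.
      * eapply SDerh_perm; [apply (contract_below n0 ltac:(lia) _ X (b :: G1) _ Hb) | ];
          perm_solve.
  - apply (contraction_at_box n0 G' X G G0 l); auto.
Qed.

Lemma SDerh_contract n X G D : SDerh n (X :: X :: G) D -> SDerh n (X :: G) D.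
Proof.
  intros H.
  exact (lt_wf_ind n contraction_at contraction_at_step _ _ _ _ H (Permutation_refl _)).
Qed.

Lemma SDer_perm G G' D : SDer G D -> Permutation G G' -> SDer G' D.
Proof.
  intros H HP; destruct (SDer_SDerh _ _ H) as [n Hn].
  exact (SDerh_SDer _ _ _ (SDerh_perm _ _ _ _ Hn HP)).
Qed.

Lemma SDer_weaken X G D : SDer G D -> SDer (X :: G) D.
Proof.
  intros H; destruct (SDer_SDerh _ _ H) as [n Hn].
  exact (SDerh_SDer _ _ _ (SDerh_weaken _ _ _ X Hn)).
Qed.

Lemma SDer_weaken_app L G D : SDer G D -> SDer (L ++ G) D.
Proof. intros H; induction L; simpl; auto using SDer_weaken. Qed.

Lemma SDer_contract X G D : SDer (X :: X :: G) D -> SDer (X :: G) D.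
Proof.
  intros H; destruct (SDer_SDerh _ _ H) as [n Hn].
  exact (SDerh_SDer _ _ _ (SDerh_contract _ _ _ _ Hn)).
Qed.

Lemma SDer_contract_incl L G D : incl L G -> SDer (L ++ G) D -> SDer G D.
Proof.
  revert G; induction L as [|x L IHL]; intros G HL H; [exact H|].
  apply IHL; [eapply incl_cons_inv; eauto|].
  destruct (in_perm_split x G) as [G0 HG0]; [apply HL; left; auto|].
  eapply SDer_perm; [apply (SDer_contract x (L ++ G0)) | perm_solve].
  eapply SDer_perm; [exact H | perm_solve].
Qed.

Fixpoint fsize (A : formula) : nat :=
  match A with
  | Var _ | Bot => 1
  | And a b | Or a b | Imp a b | SImp a b => S (fsize a + fsize b)
  end.

Definition cut_admissible (A : formula) : Prop :=
  forall G D, SDer G (Some A) -> SDer (A :: G) D -> SDer G D.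

Lemma cut_app A G1 G2 D : cut_admissible A ->
  SDer G1 (Some A) -> SDer (A :: G2) D -> SDer (G1 ++ G2) D.
Proof.
  intros cutA H1 H2; apply cutA.
  - eapply SDer_perm; [apply (SDer_weaken_app G2), H1 | perm_solve].
  - eapply SDer_perm; [apply (SDer_weaken_app G1), H2 | perm_solve].
Qed.

Definition right_intro (G : list formula) (A : formula) : Prop :=
  match A with
  | And a b => SDer G (Some a) /\ SDer G (Some b)
  | Or a b => SDer G (Some a) \/ SDer G (Some b)
  | Imp a b => SDer (a :: G) (Some b)
  | SImp a b => exists G0 l, Permutation G (map simp_pair l ++ G0) /\
      (forall rs, In rs l -> SDer [a] (Some (fst rs)) /\ SDer [fst rs] (Some a)) /\
      SDer (map snd l) (Some b)
  | _ => False
  end.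

Lemma cut_and_principal a b G D : cut_admissible a -> cut_admissible b ->
  right_intro G (And a b) -> SDer (a :: b :: G) D -> SDer G D.
Proof.
  intros cut_a cut_b [Ha Hb] H; apply cut_a; [exact Ha|].
  apply cut_b; [apply SDer_weaken, Hb | eapply SDer_perm; [exact H | perm_solve]].
Qed.

Lemma cut_or_principal a b G D : cut_admissible a -> cut_admissible b ->
  right_intro G (Or a b) -> SDer (a :: G) D -> SDer (b :: G) D -> SDer G D.
Proof. intros cut_a cut_b [Ha|Hb] H1 H2; [apply cut_a | apply cut_b]; auto. Qed.

Lemma cut_imp_principal a b G D : cut_admissible a -> cut_admissible b ->
  right_intro G (Imp a b) -> SDer G (Some a) -> SDer (b :: G) D -> SDer G D.
Proof. intros cut_a cut_b Hab Ha Hb; apply cut_b; [apply cut_a|]; auto. Qed.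

(* The conclusion is first derived with the strict conditionals of [G] duplicated,
   which contraction then removes. *)
Lemma cut_box_principal r s a b l G G1 : cut_admissible r -> cut_admissible s ->
  right_intro G (SImp r s) -> Permutation G (map simp_pair l ++ G1) ->
  SDer [a] (Some r) -> SDer [r] (Some a) ->
  (forall rs, In rs l -> SDer [a] (Some (fst rs)) /\ SDer [fst rs] (Some a)) ->
  SDer (s :: map snd l) (Some b) -> SDer G (Some (SImp a b)).
Proof.
  intros cut_r cut_s [G2 [l' [HG' [Hl' Hs]]]] HG Har Hra Hl Hb.
  apply (SDer_contract_incl (map simp_pair l')).
  { intros x Hx; rewrite HG'; apply in_or_app; left; exact Hx. }
  eapply S_box with (l := l' ++ l) (G := G1).
  - change (fun rs => SImp (fst rs) (snd rs)) with simp_pair.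
    rewrite map_app, HG; perm_solve.
  - intros rs Hin; apply in_app_or in Hin as [Hin|Hin]; [|auto].
    destruct (Hl' rs Hin) as [Hrx Hxr]; split.
    + exact (cut_app r [a] [] _ cut_r Har Hrx).
    + exact (cut_app r [fst rs] [] _ cut_r Hxr Hra).
  - rewrite map_app; exact (cut_app s _ _ _ cut_s Hs Hb).
Qed.

Definition cut_below (A : formula) (h : nat) : Prop := forall n m G D,
  n + m < h -> SDerh n G (Some A) -> SDerh m (A :: G) D -> SDer G D.

Lemma cut_into_left_premise A n m X Ys G G0 D : cut_below A (S n + m) ->
  left_premise X Ys -> Permutation G (X :: G0) ->
  SDerh n (Ys ++ G0) (Some A) -> SDerh m (A :: G) D -> SDer (Ys ++ G0) D.
Proof.
  intros IH HXY HG Hl Hr; apply (IH n m); [lia | exact Hl |].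
  eapply SDerh_perm; [apply (SDerh_invert _ _ _ X Ys (A :: G0) Hr HXY) |]; perm_solve.
Qed.

Lemma cut_into_right_premise A n m X Ys G G0 D : cut_below A (n + S m) ->
  left_premise X Ys -> Permutation G (X :: G0) ->
  SDerh n G (Some A) -> SDerh m (Ys ++ A :: G0) D -> SDer (Ys ++ G0) D.
Proof.
  intros IH HXY HG Hl Hr.
  apply (IH n m); [lia | exact (SDerh_invert _ _ _ X Ys G0 Hl HXY HG) |].
  eapply SDerh_perm; [exact Hr | perm_solve].
Qed.

Lemma cut_left A n m G D : cut_below A (n + m) ->
  SDerh n G (Some A) -> SDerh m (A :: G) D -> right_intro G A \/ SDer G D.
Proof.
  intros IH Hl Hr; inversion Hl as [? ? ? ? HG | | | | | | | | |]; subst; simpl.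
  - right; apply (SDerh_SDer m); eapply SDerh_perm; [apply SDerh_contract | symmetry; eauto].
    eapply SDerh_perm; [exact Hr | rewrite HG; auto].
  - right; eapply S_botL; eauto.
  - right; eapply S_andL; [eauto|].
    eapply (cut_into_left_premise _ _ _ _ [a; b]); eauto using lp_and.
  - left; split; eapply SDerh_SDer; eauto.
  - right; eapply S_orL; [eauto| |].
    + eapply (cut_into_left_premise _ _ _ _ [a]); eauto using lp_or1.
    + eapply (cut_into_left_premise _ _ _ _ [b]); eauto using lp_or2.
  - left; left; eapply SDerh_SDer; eauto.
  - left; right; eapply SDerh_SDer; eauto.
  - left; eapply SDerh_SDer; eauto.
  - right; eapply S_impL; [eauto | eapply SDerh_SDer; eauto |].
    eapply (cut_into_left_premise _ _ _ _ [b]); eauto using lp_imp.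
  - left; exists G0, l; eauto using SDerh_SDer.
Qed.

Lemma cut_right_impL A n m G G0 a b D :
  (forall B, fsize B < fsize A -> cut_admissible B) ->
  cut_below A (n + S m) -> right_intro G A -> SDerh n G (Some A) ->
  Permutation (A :: G) (Imp a b :: G0) ->
  SDerh m (Imp a b :: G0) (Some a) -> SDerh m (b :: G0) D -> SDer G D.
Proof.
  intros cut_smaller IH RI Hl HG Ha Hb.
  destruct (perm_two_cons _ _ _ _ _ (Permutation_refl (A :: G)) HG)
    as [[-> HP]|[G1 [HG1 HGG]]].
  - apply (cut_imp_principal a b); try (apply cut_smaller; simpl; lia); [exact RI | |].
    + apply (IH n m); [lia | exact Hl | eapply SDerh_perm; [exact Ha | perm_solve]].
    + eapply SDerh_SDer, SDerh_perm; [exact Hb | perm_solve].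
  - eapply S_impL; [exact HGG| |].
    + apply (IH n m); [lia | eapply SDerh_perm; [exact Hl | exact HGG] |].
      eapply SDerh_perm; [exact Ha | perm_solve].
    + apply (cut_into_right_premise A n m (Imp a b) [b] G G1); auto using lp_imp.
      eapply SDerh_perm; [exact Hb | perm_solve].
Qed.

Lemma cut_right_box A m G G0 l a b :
  (forall B, fsize B < fsize A -> cut_admissible B) -> right_intro G A ->
  Permutation (A :: G) (map simp_pair l ++ G0) ->
  (forall rs, In rs l -> SDer [a] (Some (fst rs)) /\ SDer [fst rs] (Some a)) ->
  SDerh m (map snd l) (Some b) -> SDer G (Some (SImp a b)).
Proof.
  intros cut_smaller RI HG Hside Hb.
  destruct (perm_cons_box _ _ _ _ _ (Permutation_refl (A :: G)) HG)
    as [[G1 [HG1 HGG]]|[[r s] [l0 [-> [Hl0 HGl]]]]].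
  - eapply S_box; [exact HGG | exact Hside | eapply SDerh_SDer; eauto].
  - assert (Hrs : In (r, s) l) by (rewrite Hl0; left; auto).
    apply (cut_box_principal r s a b l0 G G0); try (apply cut_smaller; simpl; lia);
      try apply (Hside _ Hrs); [exact RI | exact HGl | |].
    + intros rs Hin; apply Hside; rewrite Hl0; right; exact Hin.
    + exact (SDerh_SDer _ _ _ (SDerh_perm _ _ _ _ Hb (Permutation_map snd Hl0))).
Qed.

Lemma cut_right A n m G D : (forall B, fsize B < fsize A -> cut_admissible B) ->
  cut_below A (n + m) -> right_intro G A ->
  SDerh n G (Some A) -> SDerh m (A :: G) D -> SDer G D.
Proof.
  intros cut_smaller IH RI Hl Hr.
  inversion Hr as [? ? ? p HG | ? ? ? ? HG | n0 ? ? a b ? HG Hab | n0 ? a b Ha Hb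
    | n0 ? ? a b ? HG Ha Hb | n0 ? a b Ha | n0 ? a b Hb | n0 ? a b Hab
    | n0 ? ? a b ? HG Ha Hb | n0 ? ? l a b HG Hside Hb]; subst.
  - assert (Hin : In (Var p) (A :: G)) by (rewrite HG; left; auto).
    destruct Hin as [->|Hin]; [destruct RI|].
    exact (SDerh_SDer _ _ _ (SDerh_init_in 0 _ _ Hin)).
  - assert (Hin : In Bot (A :: G)) by (rewrite HG; left; auto).
    destruct Hin as [->|Hin]; [destruct RI|].
    exact (SDerh_SDer _ _ _ (SDerh_bot_in 0 _ _ Hin)).
  - destruct (perm_two_cons _ _ _ _ _ (Permutation_refl (A :: G)) HG)
      as [[-> HP]|[G1 [HG1 HGG]]].
    + apply (cut_and_principal a b); try (apply cut_smaller; simpl; lia); [exact RI|].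
      eapply SDerh_SDer, SDerh_perm; [exact Hab | perm_solve].
    + eapply S_andL; [exact HGG|].
      apply (cut_into_right_premise A n n0 (And a b) [a; b] G G1); auto using lp_and.
      eapply SDerh_perm; [exact Hab | perm_solve].
  - apply S_andR; [apply (IH n n0) | apply (IH n n0)]; auto; lia.
  - destruct (perm_two_cons _ _ _ _ _ (Permutation_refl (A :: G)) HG)
      as [[-> HP]|[G1 [HG1 HGG]]].
    + apply (cut_or_principal a b); try (apply cut_smaller; simpl; lia); [exact RI | |];
        eapply SDerh_SDer, SDerh_perm; [exact Ha | perm_solve | exact Hb | perm_solve].
    + eapply S_orL; [exact HGG| |].
      * apply (cut_into_right_premise A n n0 (Or a b) [a] G G1); auto using lp_or1.
        eapply SDerh_perm; [exact Ha | perm_solve].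
      * apply (cut_into_right_premise A n n0 (Or a b) [b] G G1); auto using lp_or2.
        eapply SDerh_perm; [exact Hb | perm_solve].
  - apply S_orR1, (IH n n0); auto; lia.
  - apply S_orR2, (IH n n0); auto; lia.
  - apply S_impR, (IH n n0); [lia | apply SDerh_weaken, Hl |].
    eapply SDerh_perm; [exact Hab | perm_solve].
  - exact (cut_right_impL A n n0 G G0 a b D cut_smaller IH RI Hl HG Ha Hb).
  - exact (cut_right_box A n0 G G0 l a b cut_smaller RI HG Hside Hb).
Qed.

Lemma cut_below_all A : (forall B, fsize B < fsize A -> cut_admissible B) ->
  forall h, cut_below A h.
Proof.
  intros cut_smaller h; induction h as [|h IH]; intros n m G D Hnm Hl Hr; [lia|].
  assert (IH' : cut_below A (n + m)) by (intros n' m' **; apply (IH n' m'); auto; lia).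
  destruct (cut_left A n m G D IH' Hl Hr) as [RI | HD]; [|exact HD].
  exact (cut_right A n m G D cut_smaller IH' RI Hl Hr).
Qed.

Lemma cut_admissible_all A : cut_admissible A.
Proof.
  induction A as [A IH] using (well_founded_induction (well_founded_ltof _ fsize)).
  intros G D Hl Hr.
  destruct (SDer_SDerh _ _ Hl) as [n Hn]; destruct (SDer_SDerh _ _ Hr) as [m Hm].
  exact (cut_below_all A IH (S (n + m)) n m G D ltac:(lia) Hn Hm).
Qed.

Lemma SDer_cut G A D : SDer G (Some A) -> SDer (A :: G) D -> SDer G D.
Proof. apply cut_admissible_all. Qed.

Lemma SDer_id A G : SDer (A :: G) (Some A).
Proof.
  revert G; induction A as [p| |a IHa b IHb|a IHa b IHb|a IHa b IHb|a IHa b IHb]; intros G.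
  - eapply S_init; eauto.
  - eapply S_botL; eauto.
  - eapply S_andL; [eauto|]; apply S_andR; [auto|].
    eapply SDer_perm; [apply (IHb (a :: G)) | perm_solve].
  - eapply S_orL; [eauto| |]; [apply S_orR1 | apply S_orR2]; auto.
  - apply S_impR; eapply S_impL with (G := a :: G) (a := a) (b := b); [perm_solve| |]; [|auto].
    eapply SDer_perm; [apply (IHa (Imp a b :: G)) | perm_solve].
  - eapply S_box with (l := [(a, b)]) (G := G); [simpl; eauto | |simpl; auto].
    intros rs [<-|[]]; simpl; auto.
Qed.

Lemma SDer_hyp G a : In a G -> SDer G (Some a).
Proof.
  intros Ha; destruct (in_perm_split _ _ Ha) as [G0 HG].
  eapply SDer_perm; [apply (SDer_id a G0) | symmetry; exact HG].
Qed.

Lemma SDer_mp_hyp G a b : In (Imp a b) G -> SDer G (Some a) -> SDer G (Some b).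
Proof.
  intros Hab Ha; destruct (in_perm_split _ _ Hab) as [G0 HG].
  eapply S_impL; [exact HG | eapply SDer_perm; [exact Ha | exact HG] | apply SDer_id].
Qed.

Lemma SDer_mp G a b : SDer G (Some (Imp a b)) -> SDer G (Some a) -> SDer G (Some b).
Proof.
  intros Hab Ha; apply (SDer_cut _ _ _ Hab).
  apply (SDer_mp_hyp _ a); [left; auto | apply SDer_weaken, Ha].
Qed.

Lemma SDer_imp_inv G a b : SDer G (Some (Imp a b)) -> SDer (a :: G) (Some b).
Proof. intros H; apply (SDer_mp _ a); [apply SDer_weaken, H | apply SDer_id]. Qed.

Lemma SDer_and_inv G a b : SDer G (Some (And a b)) -> SDer G (Some a) /\ SDer G (Some b).
Proof.
  intros H; split; apply (SDer_cut _ _ _ H); eapply S_andL; eauto;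
    apply SDer_hyp; simpl; auto.
Qed.

Lemma SDer_top G : SDer G (Some Top).
Proof. apply S_impR; eapply S_botL; eauto. Qed.

Lemma SDer_iff a r : SDer [] (Some (Iff a r)) <-> SDer [a] (Some r) /\ SDer [r] (Some a).
Proof.
  split.
  - intros H; apply SDer_and_inv in H as [Har Hra].
    split; apply SDer_imp_inv; assumption.
  - intros [Har Hra]; apply S_andR; apply S_impR; assumption.
Qed.

Lemma SDer_SImp_single a r b c :
  SDer [a] (Some r) -> SDer [r] (Some a) -> SDer [b] (Some c) ->
  SDer [SImp r b] (Some (SImp a c)).
Proof.
  intros Har Hra Hbc.
  eapply S_box with (l := [(r, b)]) (G := []); [simpl; eauto | | exact Hbc].
  intros rs [<-|[]]; simpl; auto.
Qed.

Lemma HDer_SDer phi : HDer phi -> SDer [] (Some phi).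
Proof.
  induction 1.
  - apply S_impR, S_impR, SDer_hyp; simpl; auto.
  - apply S_impR, S_impR, S_impR.
    apply (SDer_mp _ b); apply (SDer_mp_hyp _ a); simpl; auto; apply SDer_hyp; simpl; auto.
  - apply S_impR; eapply S_andL; eauto; apply SDer_hyp; simpl; auto.
  - apply S_impR; eapply S_andL; eauto; apply SDer_hyp; simpl; auto.
  - apply S_impR, S_impR, S_andR; apply SDer_hyp; simpl; auto.
  - apply S_impR, S_orR1, SDer_hyp; simpl; auto.
  - apply S_impR, S_orR2, SDer_hyp; simpl; auto.
  - apply S_impR, S_impR, S_impR; eapply S_orL; eauto;
      [apply (SDer_mp_hyp _ a) | apply (SDer_mp_hyp _ b)]; simpl; auto;
      apply SDer_hyp; simpl; auto.
  - apply S_impR; eapply S_botL; eauto.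
  - exact (SDer_mp _ _ _ IHHDer1 IHHDer2).
  - apply SDer_iff in IHHDer as [Har Hra].
    apply SDer_iff; split; apply SDer_SImp_single; auto using SDer_id.
  - apply SDer_iff in IHHDer as [Hbc Hcb].
    apply SDer_iff; split; apply SDer_SImp_single; auto using SDer_id.
  - destruct (SDer_and_inv [And b c] b c (SDer_id _ _)) as [Hb Hc].
    apply S_impR, S_andR; apply SDer_SImp_single; auto using SDer_id.
  - apply S_impR; eapply S_andL; eauto.
    eapply S_box with (l := [(a, b); (a, c)]) (G := []); [simpl; eauto | |].
    + intros rs [<-|[<-|[]]]; simpl; auto using SDer_id.
    + apply S_andR; apply SDer_hyp; simpl; auto.
  - eapply S_box with (l := []) (G := []); [simpl; eauto | intros rs [] | apply SDer_top].
Qed.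

Lemma SDer_big_and G : SDer G (Some (big_and G)).
Proof.
  induction G as [|x [|y G] IH]; [apply SDer_top | apply SDer_id |].
  apply S_andR; [apply SDer_id | apply SDer_weaken, IH].
Qed.

Lemma HDer_iota_SDer G D : HDer (iota G D) -> SDer G D.
Proof.
  intros H; apply HDer_SDer in H.
  assert (HD : SDer G (Some (big_or D))).
  { destruct G as [|x G]; [exact H|].
    apply (SDer_cut _ (big_and (x :: G))); [apply SDer_big_and|].
    eapply SDer_perm; [apply (SDer_weaken_app (x :: G)), SDer_imp_inv, H | perm_solve]. }
  destruct D as [a|]; [exact HD|].
  apply (SDer_cut _ _ _ HD); eapply S_botL; eauto.
Qed.

Inductive HDer_from (Gamma : list formula) : formula -> Prop :=
| HF_hyp a : In a Gamma -> HDer_from Gamma a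
| HF_thm a : HDer a -> HDer_from Gamma a
| HF_mp a b : HDer_from Gamma (Imp a b) -> HDer_from Gamma a -> HDer_from Gamma b.

Lemma HDer_imp_refl a : HDer (Imp a a).
Proof. exact (MP _ _ (MP _ _ (A2 a (Imp a a) a) (A1 _ _)) (A1 _ _)). Qed.

Lemma HDer_from_deduction Gamma a b :
  HDer_from (a :: Gamma) b -> HDer_from Gamma (Imp a b).
Proof.
  induction 1 as [x [<-|Hin]|x Hx|x y _ IH1 _ IH2].
  - apply HF_thm, HDer_imp_refl.
  - apply (HF_mp _ x); [apply HF_thm, A1 | apply HF_hyp, Hin].
  - apply (HF_mp _ x); [apply HF_thm, A1 | apply HF_thm, Hx].
  - exact (HF_mp _ _ _ (HF_mp _ _ _ (HF_thm _ _ (A2 _ _ _)) IH1) IH2).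
Qed.

Lemma HDer_from_nil a : HDer_from [] a -> HDer a.
Proof. induction 1 as [x []|x Hx|x y _ IH1 _ IH2]; eauto using MP. Qed.

Lemma HDer_from_trans Delta Gamma a : HDer_from Delta a ->
  (forall b, In b Delta -> HDer_from Gamma b) -> HDer_from Gamma a.
Proof. induction 1; intros HD; eauto using HDer_from. Qed.

Lemma HDer_from_incl Delta Gamma a : HDer_from Delta a -> incl Delta Gamma -> HDer_from Gamma a.
Proof. intros H HD; apply (HDer_from_trans _ _ _ H); auto using HF_hyp. Qed.

Lemma HDer_from_perm Gamma Gamma' a : Permutation Gamma Gamma' ->
  HDer_from Gamma a -> HDer_from Gamma' a.
Proof. intros HP H; apply (HDer_from_incl _ _ _ H); intros x; apply Permutation_in, HP. Qed.

Lemma HDer_from_thm_mp Gamma a b : HDer (Imp a b) -> HDer_from Gamma a -> HDer_from Gamma b.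
Proof. intros Hab Ha; exact (HF_mp _ _ _ (HF_thm _ _ Hab) Ha). Qed.

Lemma HDer_from_and Gamma a b : HDer_from Gamma a -> HDer_from Gamma b ->
  HDer_from Gamma (And a b).
Proof. intros Ha Hb; exact (HF_mp _ _ _ (HDer_from_thm_mp _ _ _ (A5 a b) Ha) Hb). Qed.

Lemma HDer_top : HDer Top.
Proof. apply HDer_imp_refl. Qed.

(* Monotonicity of [c []-> _]: RC replaces [x] by the equivalent [And x y], then CM. *)
Lemma HDer_SImp_mono c x y : HDer (Imp x y) -> HDer (Imp (SImp c x) (SImp c y)).
Proof.
  intros Hxy.
  assert (Hiff : HDer (Iff x (And x y))).
  { apply HDer_from_nil, HDer_from_and; [apply HDer_from_deduction | apply HF_thm, A3].
    apply HDer_from_and; [|apply (HDer_from_thm_mp _ x _ Hxy)]; apply HF_hyp; left; auto. }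
  apply (RC c) in Hiff.
  apply HDer_from_nil, HDer_from_deduction.
  apply (HDer_from_thm_mp _ _ _ (A4 (SImp c x) _)), (HDer_from_thm_mp _ _ _ (CM c x y)).
  apply (HF_mp _ (SImp c x)); [|apply HF_hyp; left; auto].
  exact (HF_thm _ _ (MP _ _ (A3 _ _) Hiff)).
Qed.

Lemma HDer_from_box a l b :
  (forall rs, In rs l -> HDer (Imp a (fst rs)) /\ HDer (Imp (fst rs) a)) ->
  HDer_from (map snd l) b -> HDer_from (map simp_pair l) (SImp a b).
Proof.
  revert b; induction l as [|[r s] l IH]; intros b Hl Hb; simpl in *.
  - apply HDer_from_nil in Hb; apply HF_thm.
    assert (Htop_b : HDer (Iff Top b)).
    { apply HDer_from_nil, HDer_from_and; apply HDer_from_deduction, HF_thm;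
        [exact Hb | apply HDer_top]. }
    exact (MP _ _ (MP _ _ (A3 _ _) (RC a _ _ Htop_b)) (CN a)).
  - destruct (Hl (r, s) (or_introl eq_refl)) as [Har Hra]; simpl in Har, Hra.
    assert (Hs : HDer_from (SImp r s :: map simp_pair l) (SImp a s)).
    { assert (Hiff : HDer (Iff a r))
        by (apply HDer_from_nil, HDer_from_and; apply HF_thm; assumption).
      apply (HDer_from_thm_mp _ _ _ (MP _ _ (A4 _ _) (RA a r s Hiff))).
      apply HF_hyp; left; auto. }
    assert (Hsb : HDer_from (SImp r s :: map simp_pair l) (SImp a (Imp s b))).
    { apply (HDer_from_incl (map simp_pair l)); [|intros x; right; auto].
      apply IH; [intros; apply Hl; auto | apply HDer_from_deduction, Hb]. }
    assert (Hmp : HDer (Imp (And s (Imp s b)) b)).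
    { apply HDer_from_nil, HDer_from_deduction.
      apply (HF_mp _ s);
        [apply (HDer_from_thm_mp _ _ _ (A4 s _)) | apply (HDer_from_thm_mp _ _ _ (A3 _ (Imp s b)))];
        apply HF_hyp; left; auto. }
    apply (HDer_from_thm_mp _ _ _ (HDer_SImp_mono a _ _ Hmp)).
    exact (HDer_from_thm_mp _ _ _ (CC _ _ _) (HDer_from_and _ _ _ Hs Hsb)).
Qed.

(* A direct fixpoint: the side premises of the box rule sit under a conjunction, for
   which the generated induction principle provides no hypotheses. *)
Lemma SDer_HDer_from G D : SDer G D -> HDer_from G (big_or D).
Proof.
  revert G D; fix IH 3; intros G0 D0 d.
  destruct d as [G G' p HP | G G' D HP | G G' a b D HP d | G a b d1 d2
    | G G' a b D HP d1 d2 | G a b d | G a b d | G a b d | G G' a b D HP d1 d2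
    | G G' l a b HP Hside d];
    try (apply (HDer_from_perm _ _ _ (Permutation_sym HP))).
  - apply HF_hyp; left; auto.
  - apply (HDer_from_thm_mp _ _ _ (A9 _)), HF_hyp; left; auto.
  - apply (HDer_from_trans _ _ _ (IH _ _ d)).
    intros x [->|[->|Hx]]; [apply (HDer_from_thm_mp _ _ _ (A3 x b))
      | apply (HDer_from_thm_mp _ _ _ (A4 a x)) | ]; apply HF_hyp; simpl; auto.
  - exact (HDer_from_and _ _ _ (IH _ _ d1) (IH _ _ d2)).
  - pose proof (HDer_from_deduction _ _ _ (IH _ _ d1)) as Hac.
    pose proof (HDer_from_deduction _ _ _ (IH _ _ d2)) as Hbc.
    apply (HF_mp _ (Or a b)); [|apply HF_hyp; left; auto].
    apply (HF_mp _ (Imp b (big_or D))); [apply (HF_mp _ (Imp a (big_or D)))|];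
      [apply HF_thm, A8 | |]; eapply HDer_from_incl; eauto; intros x; right; auto.
  - exact (HDer_from_thm_mp _ _ _ (A6 _ _) (IH _ _ d)).
  - exact (HDer_from_thm_mp _ _ _ (A7 _ _) (IH _ _ d)).
  - exact (HDer_from_deduction _ _ _ (IH _ _ d)).
  - assert (Hb : HDer_from (Imp a b :: G) b).
    { apply (HF_mp _ a); [apply HF_hyp; left; auto | exact (IH _ _ d1)]. }
    apply (HDer_from_trans _ _ _ (IH _ _ d2)).
    intros x [<-|Hx]; [exact Hb | apply HF_hyp; right; auto].
  - apply (HDer_from_incl (map simp_pair l)); [|intros x Hx; apply in_or_app; auto].
    apply HDer_from_box; [|exact (IH _ _ d)].
    intros rs Hin; destruct (Hside rs Hin) as [Hs1 Hs2].
    split; apply HDer_from_nil, HDer_from_deduction;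
      [exact (IH _ _ Hs1) | exact (IH _ _ Hs2)].
Qed.

Lemma HDer_from_big_and G a : In a G -> HDer_from [big_and G] a.
Proof.
  induction G as [|x [|y G] IH]; intros Ha; [destruct Ha | |].
  - destruct Ha as [<-|[]]; apply HF_hyp; left; auto.
  - destruct Ha as [<-|Ha].
    + apply (HDer_from_thm_mp _ _ _ (A3 x (big_and (y :: G)))), HF_hyp; left; auto.
    + apply (HDer_from_trans _ _ _ (IH Ha)); intros z [<-|[]].
      apply (HDer_from_thm_mp _ _ _ (A4 x _)), HF_hyp; left; auto.
Qed.

Lemma SDer_HDer_iota G D : SDer G D -> HDer (iota G D).
Proof.
  intros H; apply SDer_HDer_from in H; destruct G as [|x G]; [exact (HDer_from_nil _ H)|].
  apply HDer_from_nil, HDer_from_deduction.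
  exact (HDer_from_trans _ _ _ H (HDer_from_big_and _)).
Qed.

Theorem theorem7 (G : list formula) (D : option formula) :
  SDer G D <-> HDer (iota G D).
Proof.
  split; [apply SDer_HDer_iota | apply HDer_iota_SDer].
Qed.
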